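(* Let $\varphi$ be the morphism on $\{0,1\}^*$ with $\varphi(0)=010$ and $\varphi(1)=101$. Then $\mathbf{t}'=\varphi(\mathbf{t}_{3/2})$.
   Context: The Thue--Morse word in base $3/2$ is the unique binary sequence $\mathbf{t}_{3/2}=(t_n)_{n\ge0}$ with $t_0=0$, $t_{3n}=t_{3n+1}=t_{2n}$ and $t_{3n+2}=1-t_{2n+1}$ for all $n\ge0$ (equivalently, $t_n$ is the digit sum modulo $2$ of the base-$3/2$ expansion of $n$, where $\langle 0\rangle$ is empty and $\langle n\rangle=\langle m\rangle d$ for $2n=3m+d$, $d\in\{0,1,2\}$). Dekking's word $\mathbf{t}'=(x_n)_{n\ge0}$ is the unique binary infinite word with $x_0=0$ such that $\mathbf{t}'=\beta(x_0x_1)\beta(x_2x_3)\beta(x_4x_5)\cdots$, where $\beta(00)=\beta(01)=010$ and $\beta(10)=\beta(11)=101$. The morphism $\varphi$ is applied letter by letter to the infinite word $\mathbf{t}_{3/2}$. *)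

(* Binary letters 0,1 are encoded as false,true. *)
From mathcomp Require Import all_boot.
Set Implicit Arguments. Unset Strict Implicit. Unset Printing Implicit Defensive.

(* Base-3/2 expansion: <0> = empty, <n> = <m> d where 2n = 3m + d, d in {0,1,2}.
   Since m < n for n >= 1, fuel n suffices. *)
Fixpoint exp32_fuel (fuel n : nat) : seq nat :=
  match fuel with
  | 0 => [::]
  | fuel'.+1 =>
      if n == 0 then [::]
      else rcons (exp32_fuel fuel' ((2 * n) %/ 3)) ((2 * n) %% 3)
  end.

Definition exp32 (n : nat) : seq nat := exp32_fuel n n.

Definition t32 (n : nat) : bool := odd (sumn (exp32 n)).

Definition phi (a : bool) : seq bool :=
  if a then [:: true; false; true] else [:: false; true; false].

Definition phi_word (w : nat -> bool) (n : nat) : bool :=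
  nth false (phi (w (n %/ 3))) (n %% 3).

Definition beta (a b : bool) : seq bool :=
  match a, b with
  | false, false => [:: false; true; false]
  | false, true => [:: false; true; false]
  | true, false => [:: true; false; true]
  | true, true => [:: true; false; true]
  end.

(* x is Dekking's word: x_0 = 0 and x = beta(x0 x1) beta(x2 x3) beta(x4 x5) ...;
   position n lies in block n/3 at offset n mod 3. *)
Definition is_dekking (x : nat -> bool) : Prop :=
  x 0 = false /\
  forall n, x n = nth false (beta (x (2 * (n %/ 3))) (x (2 * (n %/ 3) + 1))) (n %% 3).

From mathcomp Require Import all_boot.
From mathcomp Require Import zify.

(* Since beta ignores its second letter, a Dekking word satisfies x_n = phi(x_(2m))_d
   for n = 3m + d; as 2m < n for n > 0, there is at most one such word.  For
   phi(t_(3/2)) this identity reads t_k = phi(t_m)_d where 2k = 3m + d, and that is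
   the recursion defining t_(3/2): appending the digit d to <m> flips the parity
   exactly when d = 1, which is also the only offset where phi flips its letter. *)

Lemma exp32_fuel_enough f g n : n <= f -> n <= g -> exp32_fuel f n = exp32_fuel g n.
Proof.
elim: f g n => [|f IHf] [|g] n /=; case: (n =P 0) => // n_neq0; try lia.
by move=> n_le_f n_le_g; congr rcons; apply: IHf; lia.
Qed.

Lemma exp32_rec n : 0 < n -> exp32 n = rcons (exp32 ((2 * n) %/ 3)) ((2 * n) %% 3).
Proof.
case: n => // n _; rewrite /exp32 /=.
by congr rcons; apply: exp32_fuel_enough; lia.
Qed.

Lemma t32_rec n : 0 < n -> t32 n = t32 ((2 * n) %/ 3) (+) ((2 * n) %% 3 == 1).
Proof.
move=> n_gt0; rewrite {1}/t32 exp32_rec // -cats1 sumn_cat /= addn0 oddD.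
have : (2 * n) %% 3 < 3 by rewrite ltn_pmod.
by case: ((2 * n) %% 3) => [|[|[|]]].
Qed.

Lemma nth_phi a d : d < 3 -> nth false (phi a) d = a (+) (d == 1).
Proof. by case: a; case: d => [|[|[|]]]. Qed.

Lemma beta_phi a b : beta a b = phi a.
Proof. by case: a; case: b. Qed.

Lemma phi_word_t32_double k : phi_word t32 (2 * k) = t32 k.
Proof.
case: k => [|k]; first by [].
by rewrite t32_rec // /phi_word nth_phi // ltn_pmod.
Qed.

Lemma is_dekking_phi_word_t32 : is_dekking (phi_word t32).
Proof. by split=> // n; rewrite beta_phi phi_word_t32_double. Qed.

Lemma is_dekking_unique x y : is_dekking x -> is_dekking y -> x =1 y.
Proof.
move=> [x0 xE] [y0 yE]; elim/ltn_ind=> [[|n] IHn]; first by rewrite x0 y0.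
by rewrite xE yE !beta_phi IHn //; lia.
Qed.

Theorem lemma4 :
  is_dekking (phi_word t32) /\
  forall x : nat -> bool, is_dekking x -> forall n, x n = phi_word t32 n.
Proof.
split; first exact: is_dekking_phi_word_t32.
by move=> x x_dekking; apply: is_dekking_unique is_dekking_phi_word_t32.
Qed.
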